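(* For any frame $L$, the poset $\mathrm{F}(L)$ is Dedekind complete, i.e. every non-empty subset bounded above has a supremum in $\mathrm{F}(L)$ (and every non-empty subset bounded below has an infimum).
   Context: $\mathbb{Q}$ is the rationals. A sublocale of $L$ is a subset closed under arbitrary meets and such that $x\to s\in S$ for $x\in L$, $s\in S$; $\mathrm{coS}(L)$ is the frame of sublocales ordered by reverse inclusion, with pseudocomplement $^\ast$. The frame $\mathfrak{L}(\overline{\mathbb{IR}})$ is presented by generators $(r,\textsf{---})$, $(\textsf{---},s)$ ($r,s\in\mathbb{Q}$) with relations (r1) $(r,\textsf{---})\wedge(\textsf{---},s)=0$ for $r\ge s$; (r3) $(r,\textsf{---})=\bigvee_{s>r}(s,\textsf{---})$; (r4) $(\textsf{---},s)=\bigvee_{r<s}(\textsf{---},r)$. $\overline{\mathrm{F}}(L)$ is the set of frame homomorphisms $f\colon\mathfrak{L}(\overline{\mathbb{IR}})\to\mathrm{coS}(L)$ with $f(r,\textsf{---})^\ast\le f(\textsf{---},s)$ and $f(\textsf{---},s)^\ast\le f(r,\textsf{---})$ for $r<s$, ordered by $f\le g$ iff $f(r,\textsf{---})\le g(r,\textsf{---})$ and $g(\textsf{---},s)\le f(\textsf{---},s)$; it is a complete lattice with top $\boldsymbol{+\infty}$ ($(r,\textsf{---})\mapsto1$, $(\textsf{---},s)\mapsto0$) and bottom $\boldsymbol{-\infty}$ ($(r,\textsf{---})\mapsto0$, $(\textsf{---},s)\mapsto1$). $\mathrm{F}(L)$ is the subposet of $f\in\overline{\mathrm{F}}(L)$ such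 that for all $g\in\overline{\mathrm{F}}(L)$, $f\vee g=\boldsymbol{+\infty}\Rightarrow g=\boldsymbol{+\infty}$ and $f\wedge g=\boldsymbol{-\infty}\Rightarrow g=\boldsymbol{-\infty}$. *)

From mathcomp Require Import all_boot all_order all_algebra.
Set Implicit Arguments. Unset Strict Implicit. Unset Printing Implicit Defensive.
Import Order.TTheory GRing.Theory Num.Theory.

Record frame := Frame {
  fcar :> Type;
  fle : fcar -> fcar -> Prop;
  fle_refl : forall x, fle x x;
  fle_trans : forall x y z, fle x y -> fle y z -> fle x z;
  fle_anti : forall x y, fle x y -> fle y x -> x = y;
  fsup : (fcar -> Prop) -> fcar;
  fsup_ub : forall (A : fcar -> Prop) a, A a -> fle a (fsup A);
  fsup_least : forall (A : fcar -> Prop) u,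
      (forall a, A a -> fle a u) -> fle (fsup A) u;
  fmeet : fcar -> fcar -> fcar;
  fmeet_l : forall x y, fle (fmeet x y) x;
  fmeet_r : forall x y, fle (fmeet x y) y;
  fmeet_glb : forall x y z, fle z x -> fle z y -> fle z (fmeet x y);
  fdistr : forall x (A : fcar -> Prop),
      fmeet x (fsup A) = fsup (fun z => exists2 a, A a & z = fmeet x a)
}.

Section FrameDefs.
Variable L : frame.

Definition finf (A : L -> Prop) : L := fsup (fun x => forall a, A a -> fle x a).
Definition ftop : L := finf (fun _ => False).
Definition fimp (x y : L) : L := fsup (fun z => fle (fmeet z x) y).

Definition is_sublocale (S : L -> Prop) : Prop :=
  (forall A : L -> Prop, (forall a, A a -> S a) -> S (finf A)) /\
  (forall x s, S s -> S (fimp x s)).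

(* coS(L): sublocales ordered by REVERSE inclusion *)
Definition cos_le (S T : L -> Prop) : Prop := forall x, T x -> S x.
Definition cos_eq (S T : L -> Prop) : Prop := cos_le S T /\ cos_le T S.
(* bottom 0 of coS(L) = L itself, top 1 of coS(L) = {1} *)
Definition cos_zero : L -> Prop := fun _ => True.
Definition cos_one : L -> Prop := fun x => x = ftop.
Definition cos_gen (A : L -> Prop) : L -> Prop :=
  fun x => forall T, is_sublocale T -> (forall a, A a -> T a) -> T x.
Definition cos_meet (S T : L -> Prop) : L -> Prop := cos_gen (fun x => S x \/ T x).
Definition cos_join (F : (L -> Prop) -> Prop) : L -> Prop :=
  fun x => forall S, F S -> S x.
Definition cos_pc (S : L -> Prop) : L -> Prop :=
  cos_join (fun T => is_sublocale T /\ cos_eq (cos_meet S T) cos_zero).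

(* Frame homomorphisms L(IR-bar) -> coS(L), given by their values on   *)
(* the generators (r,---) |-> up r and (---,s) |-> down s, subject to  *)
(* the defining relations (r1),(r3),(r4) holding in coS(L).            *)
Record rfun := RFun { up : rat -> (L -> Prop); down : rat -> (L -> Prop) }.

Definition is_frame_hom_LIR (f : rfun) : Prop :=
  (forall r, is_sublocale (up f r)) /\
  (forall s, is_sublocale (down f s)) /\
  (forall r s : rat, (s <= r)%R -> cos_eq (cos_meet (up f r) (down f s)) cos_zero) /\
  (forall r : rat, cos_eq (up f r) (cos_join (fun S => exists2 s : rat, (r < s)%R & S = up f s))) /\
  (forall s : rat, cos_eq (down f s) (cos_join (fun S => exists2 r : rat, (r < s)%R & S = down f r))).

Definition in_Fbar (f : rfun) : Prop :=
  is_frame_hom_LIR f /\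
  (forall r s : rat, (r < s)%R ->
     cos_le (cos_pc (up f r)) (down f s) /\ cos_le (cos_pc (down f s)) (up f r)).

Definition rle (f g : rfun) : Prop :=
  (forall r, cos_le (up f r) (up g r)) /\ (forall s, cos_le (down g s) (down f s)).
Definition req (f g : rfun) : Prop := rle f g /\ rle g f.

Definition pinfty : rfun := RFun (fun _ => cos_one) (fun _ => cos_zero).
Definition minfty : rfun := RFun (fun _ => cos_zero) (fun _ => cos_one).

Definition join_is (f g u : rfun) : Prop :=
  in_Fbar u /\ rle f u /\ rle g u /\
  (forall v, in_Fbar v -> rle f v -> rle g v -> rle u v).
Definition meet_is (f g u : rfun) : Prop :=
  in_Fbar u /\ rle u f /\ rle u g /\
  (forall v, in_Fbar v -> rle v f -> rle v g -> rle v u).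

Definition in_F (f : rfun) : Prop :=
  in_Fbar f /\
  (forall g, in_Fbar g -> join_is f g pinfty -> req g pinfty) /\
  (forall g, in_Fbar g -> meet_is f g minfty -> req g minfty).

Definition F_dedekind_complete : Prop :=
  (forall S : rfun -> Prop,
     (forall f, S f -> in_F f) -> (exists f, S f) ->
     (exists u, in_F u /\ forall f, S f -> rle f u) ->
     exists s, in_F s /\ (forall f, S f -> rle f s) /\
               (forall u, in_F u -> (forall f, S f -> rle f u) -> rle s u)) /\
  (forall S : rfun -> Prop,
     (forall f, S f -> in_F f) -> (exists f, S f) ->
     (exists l, in_F l /\ forall f, S f -> rle l f) ->
     exists i, in_F i /\ (forall f, S f -> rle i f) /\
               (forall l, in_F l -> (forall f, S f -> rle l f) -> rle l i)).

End FrameDefs.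

From mathcomp Require Import all_boot all_order all_algebra.
From Stdlib Require Import FunctionalExtensionality.
Import Order.TTheory GRing.Theory Num.Theory.
Set Implicit Arguments. Unset Strict Implicit.

(** Suprema in F-bar(L) are computed in coS(L): for a family [S], put
    [D s = \/_{t<s} (\/_{f in S} f(t,---))^*] and [U r = \/_{s>r} (D s)^*].
    That [(U, D)] satisfies the relations rests on [A /\ A^* = 0] in coS(L) for every
    sublocale [A], which holds because every [y] is the meet of [nucleus A y], lying in
    [A], and of [fimp (nucleus A y) y], lying in every sublocale that meets [A] trivially.
    F(L) is order-convex in F-bar(L): the condition on joins passes down from an upper
    bound in F(L) and the condition on meets passes up from any member of [S].
    Infima follow through the order-reversing involution [(r,---) <-> (---,-r)]. *)

Section FrameFacts.
Variable L : frame.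
Implicit Types (x y z a b c : L) (M S T : L -> Prop).

Lemma fmeetC x y : fmeet x y = fmeet y x.
Proof. by apply: fle_anti; apply: fmeet_glb; (apply: fmeet_l || apply: fmeet_r). Qed.

Lemma fmeetA x y z : fmeet x (fmeet y z) = fmeet (fmeet x y) z.
Proof.
apply: fle_anti; repeat apply: fmeet_glb;
  first [ exact: fmeet_l | exact: fmeet_r
        | exact: fle_trans (fmeet_l _ _) (fmeet_l _ _)
        | exact: fle_trans (fmeet_l _ _) (fmeet_r _ _)
        | exact: fle_trans (fmeet_r _ _) (fmeet_l _ _)
        | exact: fle_trans (fmeet_r _ _) (fmeet_r _ _) ].
Qed.

Lemma fmeet_eq_l a b : fle a b -> fmeet a b = a.
Proof.
by move=> ab; apply: fle_anti; [apply: fmeet_l | apply: fmeet_glb (fle_refl a) ab].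
Qed.

Lemma finf_lb M a : M a -> fle (finf M) a.
Proof. by move=> Ma; apply: fsup_least => b; apply. Qed.

Lemma finf_glb M z : (forall a, M a -> fle z a) -> fle z (finf M).
Proof. exact: (@fsup_ub L (fun x => forall a, M a -> fle x a)). Qed.

Lemma fle_ftop x : fle x (ftop L).
Proof. exact: finf_glb. Qed.

Lemma fmeet_finf x y : fmeet x y = finf (fun z => z = x \/ z = y).
Proof.
apply: fle_anti.
  by apply: finf_glb => _ [->|->]; [apply: fmeet_l | apply: fmeet_r].
by apply: fmeet_glb; apply: finf_lb; [left | right].
Qed.

Lemma fle_fimp z x y : fle z (fimp x y) <-> fle (fmeet z x) y.
Proof.
split=> [z_xy | zx_y]; last exact: (@fsup_ub L (fun w => fle (fmeet w x) y)).
have zx_le : fle (fmeet z x) (fmeet x (fimp x y)).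
  by apply: fmeet_glb; [apply: fmeet_r | apply: fle_trans (fmeet_l _ _) z_xy].
apply: fle_trans zx_le _; rewrite /fimp fdistr; apply: fsup_least => _ [w wx_y ->].
by rewrite fmeetC.
Qed.

Lemma fimp_ftop x y : fle x y -> fimp x y = ftop L.
Proof.
move=> xy; apply: fle_anti; first exact: fle_ftop.
by apply/fle_fimp; apply: fle_trans (fmeet_r _ _) xy.
Qed.

Lemma fimp_mono_r x y y' : fle y y' -> fle (fimp x y) (fimp x y').
Proof. by move=> yy'; apply/fle_fimp; apply: fle_trans yy'; apply/fle_fimp; apply: fle_refl. Qed.

Lemma fimp_fmeet a b c : fimp (fmeet a b) c = fimp a (fimp b c).
Proof.
apply: fle_anti; apply/fle_fimp.
  by apply/fle_fimp; rewrite -fmeetA; apply/fle_fimp; apply: fle_refl.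
by rewrite fmeetA; exact: (fle_fimp _ _ _).1 ((fle_fimp _ _ _).1 (fle_refl _)).
Qed.

Lemma fimp_absorb a b c : fle a b -> fimp a (fimp b c) = fimp a c.
Proof. by move=> ab; rewrite -fimp_fmeet fmeet_eq_l. Qed.

Lemma fimp_finf a M :
  fimp a (finf M) = finf (fun z => exists2 m, M m & z = fimp a m).
Proof.
apply: fle_anti.
  by apply: finf_glb => _ [m Mm ->]; apply: fimp_mono_r; apply: finf_lb.
apply/fle_fimp; apply: finf_glb => m Mm; apply/fle_fimp; apply: finf_lb.
by exists m.
Qed.

Lemma fmeet_fimpK a y : fle y a -> fmeet a (fimp a y) = y.
Proof.
move=> ya; apply: fle_anti; first by rewrite fmeetC; apply/fle_fimp; apply: fle_refl.
by apply: fmeet_glb => //; apply/fle_fimp; apply: fmeet_l.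
Qed.

Lemma sublocale_finf S M : is_sublocale S -> (forall m, M m -> S m) -> S (finf M).
Proof. by case=> + _; apply. Qed.

Lemma sublocale_top S : is_sublocale S -> S (ftop L).
Proof. by move=> Ssub; apply: sublocale_finf. Qed.

Lemma sublocale_fmeet S x y : is_sublocale S -> S x -> S y -> S (fmeet x y).
Proof. by move=> Ssub Sx Sy; rewrite fmeet_finf; apply: sublocale_finf => // _ [->|->]. Qed.

Lemma sublocale_fimp S x y : is_sublocale S -> S y -> S (fimp x y).
Proof. by case=> _; apply. Qed.

Definition nucleus S y := finf (fun s => S s /\ fle y s).

Lemma nucleus_in S y : is_sublocale S -> S (nucleus S y).
Proof. by move=> Ssub; apply: sublocale_finf => // s []. Qed.

Lemma nucleus_ge S y : fle y (nucleus S y).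
Proof. by apply: finf_glb => s []. Qed.

Lemma nucleus_least S y s : S s -> fle y s -> fle (nucleus S y) s.
Proof. by move=> Ss ys; apply: finf_lb. Qed.

Lemma nucleus_mono S y y' : is_sublocale S -> fle y y' -> fle (nucleus S y) (nucleus S y').
Proof.
move=> Ssub yy'; apply: nucleus_least; first exact: nucleus_in.
exact: fle_trans yy' (nucleus_ge _ _).
Qed.

Lemma sublocale_nucleus_fimp S T : is_sublocale S -> is_sublocale T ->
  is_sublocale (fun y => T (fimp (nucleus S y) y)).
Proof.
move=> Ssub Tsub; split=> [M TM | x y Ty].
  set n := nucleus S (finf M).
  rewrite fimp_finf; apply: sublocale_finf => // _ [m Mm ->].
  have n_le : fle n (nucleus S m) by apply: nucleus_mono => //; apply: finf_lb.
  by rewrite -(fimp_absorb m n_le); apply: sublocale_fimp => //; apply: TM.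
set n := nucleus S (fimp x y).
have nx_le : fle (fmeet n x) (nucleus S y).
  apply/fle_fimp; apply: nucleus_least.
    by apply: sublocale_fimp => //; apply: nucleus_in.
  by apply: fimp_mono_r; apply: nucleus_ge.
by rewrite -fimp_fmeet -(fimp_absorb y nx_le); apply: sublocale_fimp.
Qed.

Lemma cos_gen_union_nucleus_fimp S T y : is_sublocale S -> is_sublocale T ->
  cos_gen (fun x => S x \/ T x) y -> T (fimp (nucleus S y) y).
Proof.
move=> Ssub Tsub /(_ (fun y => T (fimp (nucleus S y) y))); apply.
  exact: sublocale_nucleus_fimp.
move=> a [Sa | Ta]; last exact: sublocale_fimp.
by rewrite fimp_ftop; [apply: sublocale_top | apply: nucleus_least (fle_refl a)].
Qed.

Lemma cos_meet_pc S : is_sublocale S -> cos_eq (cos_meet S (cos_pc S)) (@cos_zero L).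
Proof.
move=> Ssub; split=> // y _ T Tsub ST_T.
have Tn : T (nucleus S y) by apply: ST_T; left; apply: nucleus_in.
have Tni : T (fimp (nucleus S y) y).
  apply: ST_T; right=> T' [T'sub [ST'0 _]].
  exact: cos_gen_union_nucleus_fimp (ST'0 y I).
by rewrite -(fmeet_fimpK (nucleus_ge S y)); apply: sublocale_fmeet.
Qed.

End FrameFacts.

Section CoS.
Variable L : frame.
Implicit Types (X Y Z : L -> Prop) (F : (L -> Prop) -> Prop).

Lemma cos_le_trans X Y Z : cos_le X Y -> cos_le Y Z -> cos_le X Z.
Proof. by move=> XY YZ x /YZ /XY. Qed.

Lemma cos_join_ub F X : F X -> cos_le X (cos_join F).
Proof. by move=> FX x; apply. Qed.

Lemma cos_join_least F Y : (forall X, F X -> cos_le X Y) -> cos_le (cos_join F) Y.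
Proof. by move=> FY y Yy X /FY; apply. Qed.

Lemma sublocale_cos_join F :
  (forall X, F X -> is_sublocale X) -> is_sublocale (cos_join F).
Proof.
move=> Fsub; split=> [M FM | x s Fs] X FX; have [Xinf Ximp] := Fsub X FX.
  by apply: Xinf => m /FM; apply.
exact: Ximp (Fs X FX).
Qed.

Lemma sublocale_cos_pc X : is_sublocale (cos_pc X).
Proof. by apply: sublocale_cos_join => Y []. Qed.

Lemma cos_pc_anti X Y : cos_le X Y -> cos_le (cos_pc Y) (cos_pc X).
Proof.
move=> XY y pcXy T [Tsub [XT0 _]]; apply: pcXy; split=> //; split=> // z _ U Usub YTU.
by apply: (XT0 z I U Usub) => w [Xw | Tw]; apply: YTU; [left; apply: XY | right].
Qed.

Lemma cos_le_pcP X Y : is_sublocale X -> is_sublocale Y ->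
  cos_le Y (cos_pc X) <-> cos_eq (cos_meet X Y) (@cos_zero L).
Proof.
move=> Xsub Ysub; split=> [YpcX | XY0 y]; last by apply; split.
split=> // y _ T Tsub XYT; apply: ((cos_meet_pc Xsub).1 y I T Tsub) => z [Xz | pcXz].
  by apply: XYT; left.
by apply: XYT; right; apply: YpcX.
Qed.

Lemma cos_meet_zeroC X Y :
  cos_eq (cos_meet X Y) (@cos_zero L) -> cos_eq (cos_meet Y X) (@cos_zero L).
Proof.
move=> [XY0 _]; split=> // y _ T Tsub YXT; apply: (XY0 y I T Tsub) => z XYz.
by apply: YXT; case: XYz; [right | left].
Qed.

Lemma cos_pc_sym X Y : is_sublocale X -> is_sublocale Y ->
  cos_le Y (cos_pc X) -> cos_le X (cos_pc Y).
Proof.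
move=> Xsub Ysub /(cos_le_pcP Xsub Ysub) /cos_meet_zeroC.
exact: (cos_le_pcP Ysub Xsub).2.
Qed.

End CoS.

Local Open Scope ring_scope.

Lemma rat_between (r s : rat) : r < s -> exists2 t : rat, r < t & t < s.
Proof. by move=> rs; exists ((r + s) / 2); have [] := midf_lt rs. Qed.

Section FbarFacts.
Variables (L : frame) (f : rfun L).
Hypothesis f_Fbar : in_Fbar f.

Lemma sublocale_up r : is_sublocale (up f r).
Proof. by case: f_Fbar => [[]]. Qed.

Lemma sublocale_down s : is_sublocale (down f s).
Proof. by case: f_Fbar => [[_ []]]. Qed.

Lemma Fbar_r1 (r s : rat) : s <= r -> cos_eq (cos_meet (up f r) (down f s)) (@cos_zero L).
Proof. by case: f_Fbar => [[_ [_ [r1 _]]] _]; apply: r1. Qed.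

Lemma Fbar_r3 r :
  cos_eq (up f r) (cos_join (fun X => exists2 s : rat, r < s & X = up f s)).
Proof. by case: f_Fbar => [[_ [_ [_ []]]]]. Qed.

Lemma Fbar_r4 s :
  cos_eq (down f s) (cos_join (fun X => exists2 r : rat, r < s & X = down f r)).
Proof. by case: f_Fbar => [[_ [_ [_ [_ r4]]]] _]. Qed.

Lemma Fbar_pc_up (r s : rat) : r < s -> cos_le (cos_pc (up f r)) (down f s).
Proof. by case: f_Fbar => _ compat /compat []. Qed.

Lemma Fbar_pc_down (r s : rat) : r < s -> cos_le (cos_pc (down f s)) (up f r).
Proof. by case: f_Fbar => _ compat /compat []. Qed.

Lemma Fbar_up_anti (r r' : rat) : r < r' -> cos_le (up f r') (up f r).
Proof. by move=> rr'; apply: cos_le_trans (Fbar_r3 r).2; apply: cos_join_ub; exists r'. Qed.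

Lemma Fbar_down_mono (s s' : rat) : s < s' -> cos_le (down f s) (down f s').
Proof. by move=> ss'; apply: cos_le_trans _ (Fbar_r4 s').2; apply: cos_join_ub; exists s. Qed.

Lemma Fbar_down_le_pc_up s : cos_le (down f s) (cos_pc (up f s)).
Proof. by apply/cos_le_pcP; [apply: sublocale_up | apply: sublocale_down | apply: Fbar_r1]. Qed.

End FbarFacts.

Section FbarSup.
Variables (L : frame) (S : rfun L -> Prop).
Hypothesis S_Fbar : forall f, S f -> in_Fbar f.

Definition sup_pre r := cos_join (fun X => exists2 f, S f & X = up f r).
(* The up part is recovered from the down part rather than taken to be [sup_pre],
   so that [(sup_down s)^* <= sup_up r] for [r < s] holds by construction. *)
Definition sup_down s := cos_join (fun X => exists2 t : rat, t < s & X = cos_pc (sup_pre t)).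
Definition sup_up r := cos_join (fun X => exists2 s : rat, r < s & X = cos_pc (sup_down s)).
Definition Fbar_sup := RFun sup_up sup_down.

Lemma sublocale_sup_pre r : is_sublocale (sup_pre r).
Proof. by apply: sublocale_cos_join => _ [f Sf ->]; apply: sublocale_up; apply: S_Fbar. Qed.

Lemma sublocale_sup_down s : is_sublocale (sup_down s).
Proof. by apply: sublocale_cos_join => _ [t _ ->]; apply: sublocale_cos_pc. Qed.

Lemma sublocale_sup_up r : is_sublocale (sup_up r).
Proof. by apply: sublocale_cos_join => _ [s _ ->]; apply: sublocale_cos_pc. Qed.

Lemma sup_pre_anti (t t' : rat) : t < t' -> cos_le (sup_pre t') (sup_pre t).
Proof.
move=> tt'; apply: cos_join_least => _ [f Sf ->].
by apply: cos_le_trans (Fbar_up_anti (S_Fbar Sf) tt') _; apply: cos_join_ub; exists f.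
Qed.

Lemma sup_down_mono (s s' : rat) : s <= s' -> cos_le (sup_down s) (sup_down s').
Proof.
move=> ss'; apply: cos_join_least => _ [t ts ->]; apply: cos_join_ub; exists t => //.
exact: lt_le_trans ts ss'.
Qed.

Lemma sup_up_anti (r r' : rat) : r <= r' -> cos_le (sup_up r') (sup_up r).
Proof.
move=> rr'; apply: cos_join_least => _ [s r's ->]; apply: cos_join_ub; exists s => //.
exact: le_lt_trans rr' r's.
Qed.

Lemma sup_down_le_pc_pre t : cos_le (sup_down t) (cos_pc (sup_pre t)).
Proof. by apply: cos_join_least => _ [t' t't ->]; apply: cos_pc_anti; apply: sup_pre_anti. Qed.

Lemma sup_pre_le_up (r t : rat) : r < t -> cos_le (sup_pre t) (sup_up r).
Proof.
move=> rt; apply: (@cos_le_trans _ _ (cos_pc (sup_down t))).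
  exact: cos_pc_sym (sublocale_sup_pre t) (sublocale_sup_down t) (@sup_down_le_pc_pre t).
by apply: cos_join_ub; exists t.
Qed.

Lemma Fbar_sup_r3 r :
  cos_eq (sup_up r) (cos_join (fun X => exists2 s : rat, r < s & X = sup_up s)).
Proof.
split; last by apply: cos_join_least => _ [s rs ->]; apply: sup_up_anti; apply: ltW.
apply: cos_join_least => _ [s rs ->]; have [t rt ts] := rat_between rs.
apply: (@cos_le_trans _ _ (sup_up t)); first by apply: cos_join_ub; exists s.
by apply: cos_join_ub; exists t.
Qed.

Lemma Fbar_sup_r4 s :
  cos_eq (sup_down s) (cos_join (fun X => exists2 r : rat, r < s & X = sup_down r)).
Proof.
split; last by apply: cos_join_least => _ [r rs ->]; apply: sup_down_mono; apply: ltW.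
apply: cos_join_least => _ [t ts ->]; have [u tu us] := rat_between ts.
apply: (@cos_le_trans _ _ (sup_down u)); first by apply: cos_join_ub; exists t.
by apply: cos_join_ub; exists u.
Qed.

Lemma Fbar_sup_in : in_Fbar Fbar_sup.
Proof.
split; [split; [|split; [|split; [|split]]] |] => /=.
- exact: sublocale_sup_up.
- exact: sublocale_sup_down.
- move=> r s sr; apply/(cos_le_pcP (sublocale_sup_up r) (sublocale_sup_down s)).
  apply: cos_pc_sym (sublocale_sup_down s) (sublocale_sup_up r) _.
  apply: cos_join_least => _ [s' rs' ->]; apply: cos_pc_anti; apply: sup_down_mono.
  exact: ltW (le_lt_trans sr rs').
- exact: Fbar_sup_r3.
- exact: Fbar_sup_r4.
- move=> r s rs; split; last by apply: cos_join_ub; exists s.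
  have [t rt ts] := rat_between rs.
  apply: (@cos_le_trans _ _ (cos_pc (sup_pre t))).
    by apply: cos_pc_anti; apply: sup_pre_le_up.
  by apply: cos_join_ub; exists t.
Qed.

Lemma Fbar_sup_ub f : S f -> rle f Fbar_sup.
Proof.
move=> Sf; split=> [r | s] /=.
  apply: cos_le_trans (Fbar_r3 (S_Fbar Sf) r).1 _.
  apply: cos_join_least => _ [s rs ->].
  apply: (@cos_le_trans _ _ (sup_pre s)); last exact: sup_pre_le_up.
  by apply: cos_join_ub; exists f.
apply: cos_join_least => _ [t ts ->].
apply: (@cos_le_trans _ _ (cos_pc (up f t))); last exact: Fbar_pc_up (S_Fbar Sf) _ _ ts.
by apply: cos_pc_anti; apply: cos_join_ub; exists f.
Qed.

Lemma Fbar_sup_least v : in_Fbar v -> (forall f, S f -> rle f v) -> rle Fbar_sup v.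
Proof.
move=> v_Fbar v_ub.
have down_le s : cos_le (down v s) (sup_down s).
  apply: cos_le_trans (Fbar_r4 v_Fbar s).1 _.
  apply: cos_join_least => _ [t ts ->].
  apply: (@cos_le_trans _ _ (cos_pc (up v t))); first exact: Fbar_down_le_pc_up.
  apply: (@cos_le_trans _ _ (cos_pc (sup_pre t))); last by apply: cos_join_ub; exists t.
  by apply: cos_pc_anti; apply: cos_join_least => _ [f Sf ->]; apply: (v_ub f Sf).1.
split=> [r | s] //=.
apply: cos_join_least => _ [s rs ->].
apply: (@cos_le_trans _ _ (cos_pc (down v s))); last exact: Fbar_pc_down v_Fbar _ _ rs.
exact: cos_pc_anti.
Qed.

End FbarSup.

Section ConvexF.
Variable L : frame.
Implicit Types f g h l u : rfun L.

Lemma rle_trans f g h : rle f g -> rle g h -> rle f h.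
Proof.
move=> [fg_up gf_down] [gh_up hg_down]; split=> [r | s].
  exact: cos_le_trans (fg_up r) (gh_up r).
exact: cos_le_trans (hg_down s) (gf_down s).
Qed.

Lemma rle_pinfty f : in_Fbar f -> rle f (pinfty L).
Proof. by move=> f_Fbar; split=> [r | s] x //= ->; apply: sublocale_top; apply: sublocale_up. Qed.

Lemma minfty_rle f : in_Fbar f -> rle (minfty L) f.
Proof. by move=> f_Fbar; split=> [r | s] x //= ->; apply: sublocale_top; apply: sublocale_down. Qed.

Lemma join_is_pinfty_mono f u h : in_Fbar u -> rle f u ->
  join_is f h (pinfty L) -> join_is u h (pinfty L).
Proof.
move=> u_Fbar fu [pinfty_Fbar [_ [h_le least]]].
split=> //; split; first exact: rle_pinfty.
split=> // v v_Fbar uv hv; exact: least v_Fbar (rle_trans fu uv) hv.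
Qed.

Lemma meet_is_minfty_mono l f h : in_Fbar l -> rle l f ->
  meet_is f h (minfty L) -> meet_is l h (minfty L).
Proof.
move=> l_Fbar lf [minfty_Fbar [_ [le_h greatest]]].
split=> //; split; first exact: minfty_rle.
split=> // v v_Fbar vl vh; exact: greatest v_Fbar (rle_trans vl lf) vh.
Qed.

Lemma in_F_convex l g u : in_F l -> in_F u -> in_Fbar g -> rle l g -> rle g u -> in_F g.
Proof.
move=> [l_Fbar [_ l_meet]] [u_Fbar [u_join _]] g_Fbar lg gu.
split=> //; split=> h h_Fbar.
  by move/(join_is_pinfty_mono u_Fbar gu); apply: u_join.
by move/(meet_is_minfty_mono l_Fbar lg); apply: l_meet.
Qed.

Lemma F_sup_exists (S : rfun L -> Prop) :
  (forall f, S f -> in_F f) -> (exists f, S f) ->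
  (exists u, in_F u /\ forall f, S f -> rle f u) ->
  exists s, in_F s /\ (forall f, S f -> rle f s) /\
            (forall u, in_F u -> (forall f, S f -> rle f u) -> rle s u).
Proof.
move=> S_F [f0 Sf0] [u [u_F u_ub]].
have S_Fbar f : S f -> in_Fbar f by move/S_F => [].
have sup_least v : in_F v -> (forall f, S f -> rle f v) -> rle (Fbar_sup S) v.
  by move=> [v_Fbar _]; apply: Fbar_sup_least.
exists (Fbar_sup S); split; last by split=> //; apply: Fbar_sup_ub.
exact: in_F_convex (S_F f0 Sf0) u_F (Fbar_sup_in S_Fbar) (Fbar_sup_ub S_Fbar Sf0)
  (sup_least u u_F u_ub).
Qed.

End ConvexF.

Section Negation.
Variable L : frame.
Implicit Types f g u : rfun L.

Definition neg f := RFun (fun r => down f (- r)) (fun s => up f (- s)).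

Lemma negK : involutive neg.
Proof.
by case=> u d; rewrite /neg /=; congr RFun; apply: functional_extensionality => r; rewrite opprK.
Qed.

Lemma in_Fbar_neg f : in_Fbar f -> in_Fbar (neg f).
Proof.
move=> f_Fbar; split; [split; [|split; [|split; [|split]]] |] => /=.
- by move=> r; apply: sublocale_down.
- by move=> s; apply: sublocale_up.
- by move=> r s sr; apply: cos_meet_zeroC; apply: (Fbar_r1 f_Fbar); rewrite lerN2.
- move=> r; split.
    apply: cos_le_trans (Fbar_r4 f_Fbar (- r)).1 _.
    apply: cos_join_least => _ [t tr ->]; apply: cos_join_ub; exists (- t).
      by rewrite ltrNr.
    by rewrite opprK.
  by apply: cos_join_least => _ [s rs ->]; apply: (Fbar_down_mono f_Fbar); rewrite ltrN2.
- move=> s; split.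
    apply: cos_le_trans (Fbar_r3 f_Fbar (- s)).1 _.
    apply: cos_join_least => _ [t st ->]; apply: cos_join_ub; exists (- t).
      by rewrite ltrNl.
    by rewrite opprK.
  by apply: cos_join_least => _ [r rs ->]; apply: (Fbar_up_anti f_Fbar); rewrite ltrN2.
- move=> r s rs; rewrite -ltrN2 in rs.
  by split; [apply: Fbar_pc_down | apply: Fbar_pc_up].
Qed.

Lemma rle_neg f g : rle f g -> rle (neg g) (neg f).
Proof. by move=> [fg_up gf_down]; split=> [r | s] /=; [apply: gf_down | apply: fg_up]. Qed.

Lemma rle_negP f g : rle (neg f) (neg g) <-> rle g f.
Proof. by split=> [/rle_neg | /rle_neg //]; rewrite !negK. Qed.

Lemma req_neg f g : req f g -> req (neg f) (neg g).
Proof. by move=> [fg gf]; split; apply: rle_neg. Qed.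

Lemma join_is_neg f g u : join_is f g u -> meet_is (neg f) (neg g) (neg u).
Proof.
move=> [u_Fbar [fu [gu least]]]; split; first exact: in_Fbar_neg.
split; first exact: rle_neg.
split; first exact: rle_neg.
move=> v v_Fbar vf vg; rewrite -[v]negK; apply: rle_neg; apply: least.
- exact: in_Fbar_neg.
- by apply/rle_negP; rewrite negK.
- by apply/rle_negP; rewrite negK.
Qed.

Lemma meet_is_neg f g u : meet_is f g u -> join_is (neg f) (neg g) (neg u).
Proof.
move=> [u_Fbar [uf [ug greatest]]]; split; first exact: in_Fbar_neg.
split; first exact: rle_neg.
split; first exact: rle_neg.
move=> v v_Fbar fv gv; rewrite -[v]negK; apply: rle_neg; apply: greatest.
- exact: in_Fbar_neg.
- by apply/rle_negP; rewrite negK.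
- by apply/rle_negP; rewrite negK.
Qed.

Lemma in_F_neg f : in_F f -> in_F (neg f).
Proof.
move=> [f_Fbar [f_join f_meet]]; split; first exact: in_Fbar_neg.
split=> g g_Fbar.
  move/join_is_neg; rewrite negK => /(f_meet _ (in_Fbar_neg g_Fbar)) /req_neg.
  by rewrite negK; apply.
move/meet_is_neg; rewrite negK => /(f_join _ (in_Fbar_neg g_Fbar)) /req_neg.
by rewrite negK; apply.
Qed.

Lemma F_inf_exists (S : rfun L -> Prop) :
  (forall f, S f -> in_F f) -> (exists f, S f) ->
  (exists l, in_F l /\ forall f, S f -> rle l f) ->
  exists i, in_F i /\ (forall f, S f -> rle i f) /\
            (forall l, in_F l -> (forall f, S f -> rle l f) -> rle l i).
Proof.
move=> S_F [f0 Sf0] [l [l_F l_lb]].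
have negS_F g : S (neg g) -> in_F g by move/S_F/in_F_neg; rewrite negK.
have negS_f0 : exists g, S (neg g) by exists (neg f0); rewrite negK.
have negS_ub : exists u, in_F u /\ forall g, S (neg g) -> rle g u.
  by exists (neg l); split=> [|g /l_lb /rle_neg]; [apply: in_F_neg | rewrite negK].
have [s [s_F [s_ub s_least]]] := F_sup_exists negS_F negS_f0 negS_ub.
exists (neg s); split; first exact: in_F_neg.
split=> [f Sf | l' l'_F l'_lb]; apply/rle_negP; rewrite negK.
  by apply: s_ub; rewrite negK.
apply: s_least; first exact: in_F_neg.
by move=> g /l'_lb /rle_neg; rewrite negK.
Qed.

End Negation.

Theorem proposition6p1 (L : frame) : F_dedekind_complete L.
Proof. by split=> S; [apply: F_sup_exists | apply: F_inf_exists]. Qed.
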